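(* Let $\vartheta\in\{p,bp,r\}$. The inclusion $\int\mathcal{L}_u\subset\mathcal{H}_{\vartheta}$ holds and is strict.
   Context: $\Omega$ denotes the set of all complex double sequences $x=(x_{kl})_{k,l\ge 1}$. A double sequence is $p$-convergent (Pringsheim convergent) to $L$ if for every $\varepsilon>0$ there is $N$ with $|x_{kl}-L|<\varepsilon$ for all $k,l\ge N$; $bp$-convergent if bounded and $p$-convergent; $r$-convergent (regularly convergent) if $p$-convergent and every row and every column converges. For $\vartheta\in\{p,bp,r\}$, $\mathcal{C}_{\vartheta 0}$ is the set of double sequences $\vartheta$-convergent to $0$. $\Delta x_{kl}=x_{kl}-x_{k+1,l}-x_{k,l+1}+x_{k+1,l+1}$, and $\mathcal{H}_{\vartheta}=\{x\in\Omega:\sum_{k,l=1}^{\infty}|kl\,\Delta x_{kl}|<\infty\}\cap\mathcal{C}_{\vartheta 0}$. $\mathcal{L}_u=\{x\in\Omega:\sum_{k,l}|x_{kl}|<\infty\}$, and $\int\mathcal{L}_u=\{x\in\Omega:(kl\,x_{kl})_{k,l}\in\mathcal{L}_u\}$. *)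

From Stdlib Require Import Reals.
From Coquelicot Require Import Coquelicot.
Open Scope R_scope.

(* A complex double sequence x = (x_{kl})_{k,l>=1} is represented by
   x : nat -> nat -> C with  x k l  standing for  x_{k+1,l+1}. *)
Definition dseq := nat -> nat -> C.

(* weight k*l in the paper's 1-based indexing *)
Definition wt (k l : nat) : R := INR (S k) * INR (S l).

(* sum_{k,l} |a_{kl}| < oo  (for nonnegative terms: bounded rectangular
   partial sums) *)
Definition abs_summable (a : dseq) : Prop :=
  exists M : R, forall m n : nat,
    sum_n (fun k => sum_n (fun l => Cmod (a k l)) n) m <= M.

Definition Lu (x : dseq) : Prop := abs_summable x.

Definition intLu (x : dseq) : Prop :=
  Lu (fun k l => Cmult (RtoC (wt k l)) (x k l)).

Definition Delta (x : dseq) (k l : nat) : C :=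
  Cplus (Cminus (Cminus (x k l) (x (S k) l)) (x k (S l))) (x (S k) (S l)).

Definition p_conv (x : dseq) (L : C) : Prop :=
  forall eps : R, 0 < eps -> exists N : nat,
    forall k l : nat, (N <= k)%nat -> (N <= l)%nat -> Cmod (Cminus (x k l) L) < eps.

Definition bounded_dseq (x : dseq) : Prop :=
  exists M : R, forall k l : nat, Cmod (x k l) <= M.

Definition bp_conv (x : dseq) (L : C) : Prop := bounded_dseq x /\ p_conv x L.

Definition seq_conv (u : nat -> C) : Prop :=
  exists L : C, forall eps : R, 0 < eps -> exists N : nat,
    forall n : nat, (N <= n)%nat -> Cmod (Cminus (u n) L) < eps.

Definition r_conv (x : dseq) (L : C) : Prop :=
  p_conv x L /\ (forall k : nat, seq_conv (fun l => x k l))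
             /\ (forall l : nat, seq_conv (fun k => x k l)).

Inductive mode := p_mode | bp_mode | r_mode.

Definition conv (th : mode) : dseq -> C -> Prop :=
  match th with
  | p_mode => p_conv
  | bp_mode => bp_conv
  | r_mode => r_conv
  end.

Definition C0 (th : mode) (x : dseq) : Prop := conv th x (RtoC 0).

Definition H (th : mode) (x : dseq) : Prop :=
  abs_summable (fun k l => Cmult (RtoC (wt k l)) (Delta x k l)) /\ C0 th x.

(* If the weighted sequence (kl x_kl) is absolutely summable, its terms are
   bounded, so |x_kl| <= M / (kl): x tends to 0 along rows, along columns and
   in Pringsheim's sense, and stays bounded.  Since the weight kl only grows
   when k or l is increased, |kl Delta x_kl| is dominated by the sum of the
   four weighted terms |k'l' x_k'l'| with k' in {k, k+1}, l' in {l, l+1};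
   each of these four double series is a shift of the summable one.
   For strictness take x_1l = 1 and x_kl = 0 for k >= 2: every row is
   constant, so Delta x = 0, and x converges regularly to 0, but
   sum_l |1 * l * x_1l| diverges. *)

From Pilot Require Import Defs.
From Stdlib Require Import Reals Lra Lia.
From Coquelicot Require Import Coquelicot.

Open Scope R_scope.

Lemma sum_n_nonneg (f : nat -> R) (n : nat) :
  (forall k, 0 <= f k) -> 0 <= sum_n f n.
Proof. intros Hf. rewrite sum_n_Reals. now apply cond_pos_sum. Qed.

Lemma sum_n_ge_term (f : nat -> R) (i n : nat) :
  (forall k, 0 <= f k) -> (i <= n)%nat -> f i <= sum_n f n.
Proof.
  intros Hf Hin. rewrite sum_n_Reals. induction Hin as [|n _ IH].
  - destruct i as [|i]; simpl; [lra|].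
    pose proof (cond_pos_sum f i Hf). lra.
  - simpl. specialize (Hf (S n)). lra.
Qed.

Lemma sum_n_shift_le (f : nat -> R) (n : nat) :
  (forall k, 0 <= f k) -> sum_n (fun k => f (S k)) n <= sum_n f (S n).
Proof.
  intros Hf. rewrite !sum_n_Reals, (decomp_sum f (S n)) by lia.
  specialize (Hf 0%nat). simpl pred. lra.
Qed.

Lemma sum_n_Rplus (f g : nat -> R) (n : nat) :
  sum_n (fun k => f k + g k) n = sum_n f n + sum_n g n.
Proof. rewrite !sum_n_Reals. apply sum_plus. Qed.

Definition dsum (f : nat -> nat -> R) (m n : nat) : R :=
  sum_n (fun k => sum_n (f k) n) m.

Definition dbounded (f : nat -> nat -> R) : Prop :=
  exists M : R, forall m n, dsum f m n <= M.

Lemma dsum_ge_term (f : nat -> nat -> R) (k l m n : nat) :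
  (forall i j, 0 <= f i j) -> (k <= m)%nat -> (l <= n)%nat ->
  f k l <= dsum f m n.
Proof.
  intros Hf Hk Hl. unfold dsum.
  apply Rle_trans with (sum_n (f k) n); [now apply sum_n_ge_term|].
  apply (sum_n_ge_term (fun i => sum_n (f i) n)); [|exact Hk].
  intros i. now apply sum_n_nonneg.
Qed.

Lemma dsum_plus (f g : nat -> nat -> R) (m n : nat) :
  dsum (fun k l => f k l + g k l) m n = dsum f m n + dsum g m n.
Proof.
  unfold dsum. rewrite <- sum_n_Rplus.
  apply sum_n_ext. intros k. apply sum_n_Rplus.
Qed.

Lemma dbounded_le (f g : nat -> nat -> R) :
  (forall k l, f k l <= g k l) -> dbounded g -> dbounded f.
Proof.
  intros Hfg [M HM]. exists M. intros m n.
  apply Rle_trans with (dsum g m n); [|apply HM].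
  apply sum_n_m_le. intros k. now apply sum_n_m_le.
Qed.

Lemma dbounded_plus (f g : nat -> nat -> R) :
  dbounded f -> dbounded g -> dbounded (fun k l => f k l + g k l).
Proof.
  intros [Mf Hf] [Mg Hg]. exists (Mf + Mg). intros m n.
  rewrite dsum_plus. specialize (Hf m n). specialize (Hg m n). lra.
Qed.

Lemma dbounded_shift_row (f : nat -> nat -> R) :
  (forall k l, 0 <= f k l) -> dbounded f -> dbounded (fun k l => f (S k) l).
Proof.
  intros Hf [M HM]. exists M. intros m n.
  apply Rle_trans with (dsum f (S m) n); [|apply HM].
  apply (sum_n_shift_le (fun k => sum_n (f k) n)).
  intros k. now apply sum_n_nonneg.
Qed.

Lemma dbounded_shift_col (f : nat -> nat -> R) :
  (forall k l, 0 <= f k l) -> dbounded f -> dbounded (fun k l => f k (S l)).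
Proof.
  intros Hf [M HM]. exists M. intros m n.
  apply Rle_trans with (dsum f m (S n)); [|apply HM].
  apply sum_n_m_le. intros k. now apply sum_n_shift_le.
Qed.

Lemma dbounded_terms (f : nat -> nat -> R) :
  (forall k l, 0 <= f k l) -> dbounded f -> exists M, forall k l, f k l <= M.
Proof.
  intros Hf [M HM]. exists M. intros k l.
  apply Rle_trans with (dsum f k l); [now apply dsum_ge_term|apply HM].
Qed.

Lemma dbounded_of_zero (f : nat -> nat -> R) :
  (forall k l, f k l = 0) -> dbounded f.
Proof.
  intros Hf. exists 0. intros m n. apply Req_le. unfold dsum.
  rewrite (sum_n_ext _ (fun _ => 0)); [rewrite sum_n_const; apply Rmult_0_r|].
  intros k. rewrite (sum_n_ext _ (fun _ => 0)); [rewrite sum_n_const; apply Rmult_0_r|].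
  apply Hf.
Qed.

Lemma INR_S_ge_1 (n : nat) : 1 <= INR (S n).
Proof. rewrite S_INR. pose proof (pos_INR n). lra. Qed.

Lemma wt_ge_row (k l : nat) : INR (S k) <= wt k l.
Proof. unfold wt. pose proof (INR_S_ge_1 k). pose proof (INR_S_ge_1 l). nra. Qed.

Lemma wt_ge_col (k l : nat) : INR (S l) <= wt k l.
Proof. unfold wt. pose proof (INR_S_ge_1 k). pose proof (INR_S_ge_1 l). nra. Qed.

Lemma wt_nonneg (k l : nat) : 0 <= wt k l.
Proof. pose proof (wt_ge_row k l). pose proof (INR_S_ge_1 k). lra. Qed.

Lemma wt_le_S_row (k l : nat) : wt k l <= wt (S k) l.
Proof.
  unfold wt. apply Rmult_le_compat_r; [apply pos_INR|apply le_INR; lia].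
Qed.

Lemma wt_le_S_col (k l : nat) : wt k l <= wt k (S l).
Proof.
  unfold wt. apply Rmult_le_compat_l; [apply pos_INR|apply le_INR; lia].
Qed.

Lemma Cmod_wt (k l : nat) (z : C) : Cmod (Cmult (RtoC (wt k l)) z) = wt k l * Cmod z.
Proof. rewrite Cmod_mult, Cmod_R, Rabs_pos_eq; [reflexivity|apply wt_nonneg]. Qed.

Lemma Cminus_0_r (z : C) : Cminus z (RtoC 0) = z.
Proof. ring. Qed.

(* [intLu x] unfolds to [dbounded (wabs x)], and the summability part of
   [H th x] to [dbounded (wabs (Defs.Delta x))]. *)
Definition wabs (x : dseq) (k l : nat) : R := Cmod (Cmult (RtoC (wt k l)) (x k l)).

Lemma wabs_nonneg (x : dseq) (k l : nat) : 0 <= wabs x k l.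
Proof. apply Cmod_ge_0. Qed.

Lemma wabs_ge_row (x : dseq) (k l : nat) : Cmod (x k l) * INR (S k) <= wabs x k l.
Proof.
  unfold wabs. rewrite Cmod_wt, Rmult_comm.
  apply Rmult_le_compat_r; [apply Cmod_ge_0|apply wt_ge_row].
Qed.

Lemma wabs_ge_col (x : dseq) (k l : nat) : Cmod (x k l) * INR (S l) <= wabs x k l.
Proof.
  unfold wabs. rewrite Cmod_wt, Rmult_comm.
  apply Rmult_le_compat_r; [apply Cmod_ge_0|apply wt_ge_col].
Qed.

Lemma Cmod_Delta_le (x : dseq) (k l : nat) :
  Cmod (Defs.Delta x k l) <=
  Cmod (x k l) + Cmod (x (S k) l) + Cmod (x k (S l)) + Cmod (x (S k) (S l)).
Proof.
  unfold Defs.Delta, Cminus.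
  eapply Rle_trans; [apply Cmod_triangle|].
  eapply Rle_trans; [apply Rplus_le_compat_r, Cmod_triangle|].
  eapply Rle_trans; [apply Rplus_le_compat_r, Rplus_le_compat_r, Cmod_triangle|].
  rewrite !Cmod_opp. lra.
Qed.

Lemma wabs_Delta_le (x : dseq) (k l : nat) :
  wabs (Defs.Delta x) k l <=
  wabs x k l + wabs x (S k) l + wabs x k (S l) + wabs x (S k) (S l).
Proof.
  unfold wabs. rewrite !Cmod_wt.
  apply Rle_trans with (wt k l * (Cmod (x k l) + Cmod (x (S k) l)
                                  + Cmod (x k (S l)) + Cmod (x (S k) (S l)))).
  { apply Rmult_le_compat_l; [apply wt_nonneg|apply Cmod_Delta_le]. }
  assert (Hdiag : wt k l <= wt (S k) (S l)).
  { eapply Rle_trans; [apply wt_le_S_row|apply wt_le_S_col]. }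
  rewrite !Rmult_plus_distr_l.
  repeat apply Rplus_le_compat; apply Rmult_le_compat_r;
    auto using Cmod_ge_0, Rle_refl, wt_le_S_row, wt_le_S_col.
Qed.

Lemma dbounded_wabs_Delta (x : dseq) : intLu x -> dbounded (wabs (Defs.Delta x)).
Proof.
  intros Hx.
  apply (dbounded_le _ (fun k l => wabs x k l + wabs x (S k) l
                                   + wabs x k (S l) + wabs x (S k) (S l))).
  { apply wabs_Delta_le. }
  pose proof (wabs_nonneg x) as Hnn.
  apply dbounded_plus; [apply dbounded_plus; [apply dbounded_plus|]|].
  - exact Hx.
  - exact (dbounded_shift_row _ Hnn Hx).
  - exact (dbounded_shift_col _ Hnn Hx).
  - apply (dbounded_shift_row (fun k l => wabs x k (S l))); [intros; apply Hnn|].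
    exact (dbounded_shift_col _ Hnn Hx).
Qed.

Lemma eventually_lt_of_decay (M eps : R) : 0 < eps ->
  exists N, forall n c, (N <= n)%nat -> c * INR (S n) <= M -> c < eps.
Proof.
  intros Heps. destruct (INR_unbounded (M / eps)) as [N HN].
  exists N. intros n c Hn Hc.
  assert (HM : M < eps * INR N).
  { apply (Rmult_lt_compat_l eps) in HN; [|exact Heps].
    unfold Rdiv in HN. rewrite <- Rmult_assoc, (Rmult_comm eps M), Rmult_assoc,
      Rinv_r, Rmult_1_r in HN; lra. }
  apply le_INR in Hn. rewrite S_INR in Hc. pose proof (pos_INR N).
  destruct (Rlt_or_le c eps) as [|Hce]; [assumption|].
  assert (eps * INR N <= c * (INR n + 1)) by (apply Rmult_le_compat; lra).
  lra.
Qed.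

Lemma r_conv_0_of_wabs_bound (x : dseq) (M : R) :
  (forall k l, wabs x k l <= M) -> r_conv x (RtoC 0).
Proof.
  intros HM.
  assert (Hrow : forall eps, 0 < eps -> exists N, forall k l,
            (N <= k)%nat -> Cmod (Cminus (x k l) (RtoC 0)) < eps).
  { intros eps Heps. destruct (eventually_lt_of_decay M eps Heps) as [N HN].
    exists N. intros k l Hk. rewrite Cminus_0_r. apply (HN k); [exact Hk|].
    eapply Rle_trans; [apply wabs_ge_row|apply HM]. }
  assert (Hcol : forall eps, 0 < eps -> exists N, forall k l,
            (N <= l)%nat -> Cmod (Cminus (x k l) (RtoC 0)) < eps).
  { intros eps Heps. destruct (eventually_lt_of_decay M eps Heps) as [N HN].
    exists N. intros k l Hl. rewrite Cminus_0_r. apply (HN l); [exact Hl|].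
    eapply Rle_trans; [apply wabs_ge_col|apply HM]. }
  split; [|split].
  - intros eps Heps. destruct (Hrow eps Heps) as [N HN]. exists N. auto.
  - intros k. exists (RtoC 0). intros eps Heps.
    destruct (Hcol eps Heps) as [N HN]. exists N. auto.
  - intros l. exists (RtoC 0). intros eps Heps.
    destruct (Hrow eps Heps) as [N HN]. exists N. auto.
Qed.

Lemma bounded_of_wabs_bound (x : dseq) (M : R) :
  (forall k l, wabs x k l <= M) -> bounded_dseq x.
Proof.
  intros HM. exists M. intros k l.
  pose proof (wabs_ge_row x k l). pose proof (HM k l).
  pose proof (Cmod_ge_0 (x k l)). pose proof (INR_S_ge_1 k). nra.
Qed.

Lemma C0_of_r_conv_bounded (th : mode) (x : dseq) :
  r_conv x (RtoC 0) -> bounded_dseq x -> C0 th x.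
Proof. intros Hr Hb. destruct th; simpl; [apply Hr|split; [|apply Hr]|]; assumption. Qed.

Lemma intLu_sub_H (th : mode) (x : dseq) : intLu x -> H th x.
Proof.
  intros Hx. split; [exact (dbounded_wabs_Delta x Hx)|].
  destruct (dbounded_terms (wabs x) (wabs_nonneg x) Hx) as [M HM].
  apply C0_of_r_conv_bounded.
  - exact (r_conv_0_of_wabs_bound x M HM).
  - exact (bounded_of_wabs_bound x M HM).
Qed.

Lemma Delta_rowwise_constant (x : dseq) (k l : nat) :
  (forall i j, x i (S j) = x i j) -> Defs.Delta x k l = RtoC 0.
Proof. intros Hx. unfold Defs.Delta. rewrite !Hx. ring. Qed.

Definition first_row_one : dseq :=
  fun k _ => match k with O => RtoC 1 | S _ => RtoC 0 end.

Lemma first_row_one_r_conv : r_conv first_row_one (RtoC 0).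
Proof.
  assert (Hsmall : forall k l eps, (1 <= k)%nat -> 0 < eps ->
            Cmod (Cminus (first_row_one k l) (RtoC 0)) < eps).
  { intros [|k] l eps Hk Heps; [lia|]. simpl. rewrite Cminus_0_r, Cmod_0. exact Heps. }
  split; [|split].
  - intros eps Heps. exists 1%nat. intros k l Hk _. now apply Hsmall.
  - intros k. exists (first_row_one k 0%nat). intros eps Heps. exists 0%nat. intros n _.
    replace (Cminus _ _) with (RtoC 0) by (destruct k; simpl; ring).
    rewrite Cmod_0. exact Heps.
  - intros l. exists (RtoC 0). intros eps Heps. exists 1%nat. intros k Hk. now apply Hsmall.
Qed.

Lemma first_row_one_bounded : bounded_dseq first_row_one.
Proof.
  exists 1. intros [|k] l; simpl.
  - rewrite Cmod_1. lra.
  - rewrite Cmod_0. lra.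
Qed.

Lemma first_row_one_in_H (th : mode) : H th first_row_one.
Proof.
  split.
  - apply (dbounded_of_zero (wabs (Defs.Delta first_row_one))). intros k l.
    unfold wabs. rewrite Delta_rowwise_constant by reflexivity.
    rewrite Cmod_wt, Cmod_0. apply Rmult_0_r.
  - apply C0_of_r_conv_bounded; [apply first_row_one_r_conv|apply first_row_one_bounded].
Qed.

Lemma first_row_one_not_intLu : ~ intLu first_row_one.
Proof.
  intros Hx. destruct (dbounded_terms _ (wabs_nonneg first_row_one) Hx) as [M HM].
  destruct (INR_unbounded M) as [n Hn].
  pose proof (wabs_ge_col first_row_one 0 n) as Hcol.
  simpl first_row_one in Hcol. rewrite Cmod_1, Rmult_1_l, S_INR in Hcol.
  specialize (HM 0%nat n). lra.
Qed.

Theorem corollary2p5 (th : mode) :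
  (forall x : dseq, intLu x -> H th x) /\
  (exists x : dseq, H th x /\ ~ intLu x).
Proof.
  split.
  - intros x. apply intLu_sub_H.
  - exists first_row_one. split.
    + apply first_row_one_in_H.
    + exact first_row_one_not_intLu.
Qed.
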